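(* Let $p$ be a prime, $a,b$ positive integers, $\tau\in\mathbb{Z}$, and $\alpha,\beta\ge0$ integers such that $p^\beta$ exactly divides $\gcd(a,b)$ (i.e. $p^\beta\mid\gcd(a,b)$ but $p^{\beta+1}\nmid\gcd(a,b)$) and $p^\alpha\mid a+b$. Then $p^{\alpha-\beta}$ divides $$\binom{a\tau+a-1}{a}\binom{b\tau+b}{b},$$ i.e. the $p$-adic valuation of this product is at least $\alpha-\beta$.
   Context: For integers $b\geq 0$ and $a\in\mathbb{Z}$ the binomial coefficient is defined by: $\binom{a}{b}=1$ if $b=0$; $\binom{a}{b}$ is the usual binomial coefficient if $b\geq 1$ and $a\geq 0$; and $\binom{a}{b}=(-1)^b\binom{-a+b-1}{b}$ if $b\geq1$ and $a<0$. *)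

From mathcomp Require Import all_boot all_order all_algebra.
Set Implicit Arguments. Unset Strict Implicit. Unset Printing Implicit Defensive.
Import Order.TTheory GRing.Theory Num.Theory.
Local Open Scope ring_scope.

Definition binz (a : int) (b : nat) : int :=
  if b == 0%N then 1
  else match a with
       | Posz n => ('C(n, b))%:Z
       | Negz n => (-1) ^+ b * ('C(n.+1 + b - 1, b))%:Z
       end.

From mathcomp Require Import all_boot all_order all_algebra.
From mathcomp Require Import zify ring.
Set Implicit Arguments. Unset Strict Implicit. Unset Printing Implicit Defensive.
Import GRing.Theory.

(* By Kummer's theorem, the p-adic valuation of C(m + n, m) is the number of
   i >= 1 for which adding m and n carries past the digit block modulo p^i,
   i.e. (m mod p^i) + (n mod p^i) >= p^i.  For tau >= 1 both binomials have
   this shape: C(a + u, a) and C(b + v, b) with u + 1 + v = (a + b) tau; for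
   tau <= -2, upper negation turns them into the same shape with a and b
   exchanged; for tau = 0 or -1 one factor vanishes.  For every
   beta < i <= alpha, p^i divides a + b and u + 1 + v but not b (it would
   then divide gcd a b), and these congruences force a carry in a + u or in
   b + v modulo p^i.  This gives alpha - beta carries. *)

Definition carry (q m n : nat) : bool := q <= m %% q + n %% q.

Lemma logn_fact_widen p n M : prime p -> n < M ->
  logn p n`! = \sum_(1 <= k < M) n %/ p ^ k.
Proof.
move=> p_pr lt_nM; rewrite logn_fact // [RHS](@big_cat_nat _ _ _ n.+1) //=.
rewrite [X in _ + X]big1_seq ?addn0 // => k /andP[_].
rewrite mem_index_iota => /andP[lt_nk _]; apply: divn_small.
exact: leq_trans lt_nk (ltnW (ltn_expl _ (prime_gt1 p_pr))).
Qed.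

Lemma logn_bin_carries p m n M : prime p -> m + n < M ->
  logn p 'C(m + n, m) = \sum_(1 <= i < M) carry (p ^ i) m n.
Proof.
move=> p_pr lt_mnM; have lt_mM : m < M by lia.
have lt_nM : n < M by lia.
have := bin_fact (leq_addr n m); rewrite addKn => /(congr1 (logn p)).
rewrite !lognM ?bin_gt0 ?leq_addr ?muln_gt0 ?fact_gt0 //.
rewrite !(logn_fact_widen p_pr lt_mM, logn_fact_widen p_pr lt_nM).
rewrite (logn_fact_widen p_pr lt_mnM).
have -> : \sum_(1 <= i < M) (m + n) %/ p ^ i = \sum_(1 <= i < M) m %/ p ^ i
    + \sum_(1 <= i < M) n %/ p ^ i + \sum_(1 <= i < M) carry (p ^ i) m n.
  by rewrite -!big_split; apply: eq_bigr => i _; rewrite divnD ?expn_gt0 ?prime_gt0.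
lia.
Qed.

Lemma carry_of_dvdn q a b u v : q %| a + b -> q %| u.+1 + v -> ~~ (q %| b) ->
  carry q a u || carry q b v.
Proof.
move=> dv_ab dv_uv ndv_b; have q_gt0 : 0 < q.
  rewrite lt0n; apply: contraNneq ndv_b => q0.
  by move: dv_ab; rewrite q0 !dvd0n addn_eq0 => /andP[].
have b_mod_gt0 : 0 < b %% q by rewrite lt0n -/(dvdn q b).
have le_q_ab : q <= a %% q + b %% q.
  by apply: dvdn_leq; [lia | rewrite /dvdn modnDm].
have le_q_uv : q <= (u %% q + v %% q).+1.
  apply: dvdn_leq => //; rewrite /dvdn -addSn modnDmr -addn1 -addnA modnDml.
  by rewrite addnA addn1.
rewrite /carry; lia.
Qed.

Lemma subn_leq_sum_pos (F : nat -> nat) l m n r : l <= m -> n <= r ->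
  (forall i, m <= i < n -> 0 < F i) -> n - m <= \sum_(l <= i < r) F i.
Proof.
move=> le_lm le_nr F_gt0; have [le_nm|lt_mn] := leqP n m.
  by move: le_nm; rewrite -subn_eq0 => /eqP->.
have le_mn := ltnW lt_mn.
rewrite (big_cat_nat le_lm (leq_trans le_mn le_nr)) (big_cat_nat le_mn le_nr) /=.
apply: leq_trans (leq_addl _ _); apply: leq_trans (leq_addr _ _).
rewrite -[n - m]muln1 -sum_nat_const_nat big_nat_cond [leqRHS]big_nat_cond.
by apply: leq_sum => i /andP[/F_gt0].
Qed.

Lemma leq_logn_bin_mul p a b u v alpha beta : prime p ->
    ~~ (p ^ beta.+1 %| gcdn a b) -> p ^ alpha %| a + b -> p ^ alpha %| u.+1 + v ->
  alpha - beta <= logn p ('C(a + u, a) * 'C(b + v, b)).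
Proof.
move=> p_pr ndv_gcd dv_ab dv_uv; rewrite lognM ?bin_gt0 ?leq_addr //.
pose M := (a + u + b + v + alpha).+1.
have lt_auM : a + u < M by rewrite /M; lia.
have lt_bvM : b + v < M by rewrite /M; lia.
rewrite (logn_bin_carries p_pr lt_auM) (logn_bin_carries p_pr lt_bvM) -big_split /=.
rewrite -subSS; apply: subn_leq_sum_pos => // [|i /andP[lt_beta_i]]; first lia.
rewrite ltnS => le_i_alpha.
have dv_i : p ^ i %| p ^ alpha := dvdn_exp2l p le_i_alpha.
rewrite addn_gt0 !lt0b; apply: carry_of_dvdn.
- exact: dvdn_trans dv_i dv_ab.
- exact: dvdn_trans dv_i dv_uv.
- apply: contra ndv_gcd => dv_b; apply: dvdn_trans (dvdn_exp2l p lt_beta_i) _.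
  by rewrite dvdn_gcd dv_b andbT -(dvdn_addl _ dv_b) (dvdn_trans dv_i dv_ab).
Qed.

Lemma dvdn_bin_mul p a b s alpha beta : prime p -> 0 < a ->
    ~~ (p ^ beta.+1 %| gcdn a b) -> p ^ alpha %| a + b ->
  p ^ (alpha - beta) %| 'C(a * s - 1, a) * 'C(b * s, b).
Proof.
move=> p_pr a_gt0 ndv_gcd dv_ab.
have [lt_a|le_a] := ltnP (a * s - 1) a; first by rewrite bin_small ?mul0n ?dvdn0.
have s_gt0 : 0 < s by case: s le_a => //; rewrite muln0; lia.
rewrite -(subnKC le_a) -(subnKC (leq_pmulr b s_gt0)).
rewrite pfactor_dvdn ?muln_gt0 ?bin_gt0 ?leq_addr //.
apply: leq_logn_bin_mul => //.
have -> : (a * s - 1 - a).+1 + (b * s - b) = (a + b) * (s - 1) by nia.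
exact: dvdn_mulr.
Qed.

Local Open Scope ring_scope.

Lemma binz_nat (n k : nat) : binz n k = 'C(n, k).
Proof. by rewrite /binz; case: eqP => // ->; rewrite bin0. Qed.

Lemma binzN_nat (n k : nat) : (0 < k)%N ->
  binz (- n%:Z) k = (-1) ^+ k * 'C(n + k - 1, k)%:Z.
Proof.
move=> k_gt0; have k_neq0 : (k == 0)%N = false by rewrite eqn0Ngt k_gt0.
case: n => [|n]; rewrite /binz k_neq0 -?NegzE //=.
by rewrite bin0n k_neq0 bin_small ?mulr0 //; lia.
Qed.

Theorem lemma4p1 (p : nat) (a b : nat) (tau : int) (alpha beta : nat)
  (hp : prime p) (ha : (0 < a)%N) (hb : (0 < b)%N)
  (hbeta : (p ^ beta %| gcdn a b)%N)
  (hbeta' : ~~ (p ^ beta.+1 %| gcdn a b)%N)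
  (halpha : (p ^ alpha %| a + b)%N) :
  ((p ^ (alpha - beta))%N%:Z %|
     binz (a%:Z * tau + a%:Z - 1) a * binz (b%:Z * tau + b%:Z) b)%Z.
Proof.
case: tau => n; last rewrite NegzE.
- have -> : a%:Z * n%:Z + a%:Z - 1 = (a * n.+1 - 1)%N.
    by rewrite -subzn ?muln_gt0 ?ha // mulnSr PoszD PoszM.
  have -> : b%:Z * n%:Z + b%:Z = (b * n.+1)%N by rewrite mulnSr PoszD PoszM.
  by rewrite !binz_nat -PoszM dvdzE; apply: dvdn_bin_mul.
- have -> : a%:Z * - n.+1%:Z + a%:Z - 1 = - (a * n + 1)%N%:Z.
    by rewrite -addn1 !PoszD PoszM; ring.
  have -> : b%:Z * - n.+1%:Z + b%:Z = - (b * n)%N%:Z.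
    by rewrite -addn1 PoszD PoszM; ring.
  rewrite !binzN_nat // mulrACA -PoszM; apply: dvdz_mull; rewrite dvdzE mulnC.
  have -> : (a * n + 1 + a - 1 = a * n.+1)%N by rewrite addnAC addnK mulnSr.
  rewrite -mulnSr; apply: dvdn_bin_mul => //; first by rewrite gcdnC.
  by rewrite addnC.
Qed.
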